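(* Let $\mathcal G$ be a doubly connected molecular graph. Construct $\mathcal G_{new}$ from $\mathcal G$ as follows: add a new molecule $\mathcal M_{new}$; replace a diffusive edge $b_0$ of $\mathcal G$ joining molecules $\mathcal M_1$ and $\mathcal M_2$ by two diffusive edges, $b_1$ joining $\mathcal M_1$ and $\mathcal M_{new}$ and $b_2$ joining $\mathcal M_2$ and $\mathcal M_{new}$; and replace a blue solid edge $b$ of $\mathcal G$ joining molecules $\mathcal M_3$ and $\mathcal M_4$ by two blue solid edges, $b_3$ joining $\mathcal M_3$ and $\mathcal M_{new}$ and $b_4$ joining $\mathcal M_4$ and $\mathcal M_{new}$. Then: (i) if a blue solid edge of $\mathcal G$ different from $b$ is redundant in $\mathcal G$, then it is also redundant in $\mathcal G_{new}$; (ii) if $b$ is redundant in $\mathcal G$, then at least one of $b_3$, $b_4$ is redundant in $\mathcal G_{new}$; moreover, if one of $b_3,b_4$ that is redundant in $\mathcal G_{new}$ is changed into a diffusive edge, then the other one becomes redundant in the resulting graph.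
   Context: A molecular graph is a finite multigraph whose vertices are called molecules and each of whose edges joins two distinct molecules and is either a diffusive edge or a blue solid edge (parallel edges are allowed). A molecular graph is doubly connected if there exist two disjoint sets of edges, $\mathcal B_{black}$ consisting only of diffusive edges and $\mathcal B_{blue}$ consisting only of blue solid or diffusive edges, such that each of $\mathcal B_{black}$ and $\mathcal B_{blue}$ contains a spanning tree of the set of all molecules. A blue solid edge $e$ of a doubly connected graph is redundant if the graph obtained by deleting $e$ is still doubly connected. Changing a blue solid edge into a diffusive edge means replacing it by a diffusive edge with the same two endpoints. *)

From HB Require Import structures.
From mathcomp Require Import all_boot.
Set Implicit Arguments. Unset Strict Implicit. Unset Printing Implicit Defensive.

Inductive ekind := Diffusive | BlueSolid.

(* An edge joins two molecules (unordered: e1/e2 is just a listing order). *)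
Record edge (V : Type) := Edge { e1 : V; e2 : V; ek : ekind }.
Arguments Edge {V}.

(* A molecular graph on the finite set of molecules V is a list of edges;
   parallel edges are allowed, edges are identified by their position. *)
Definition mgraph (V : Type) := seq (edge V).

Definition molecular (V : finType) (g : mgraph V) : bool :=
  all (fun e => e1 e != e2 e) g.

Definition eat (V : Type) (g : mgraph V) (i : 'I_(size g)) : edge V :=
  tnth (in_tuple g) i.

Definition adj (V : finType) (g : mgraph V) (S : {set 'I_(size g)}) : rel V :=
  fun x y => [exists i in S,
    ((e1 (eat i) == x) && (e2 (eat i) == y)) ||
    ((e1 (eat i) == y) && (e2 (eat i) == x))].

Definition connects (V : finType) (g : mgraph V) (S : {set 'I_(size g)}) : Prop :=
  forall x y : V, connect (adj S) x y.

Definition spanning_tree (V : finType) (g : mgraph V) (T : {set 'I_(size g)}) : Prop :=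
  connects T /\ forall i, i \in T -> ~ connects (T :\ i).

Definition doubly_connected (V : finType) (g : mgraph V) : Prop :=
  exists Bblack Bblue : {set 'I_(size g)},
    [disjoint Bblack & Bblue] /\
    (forall i, i \in Bblack -> ek (eat i) = Diffusive) /\
    (* every edge is blue solid or diffusive, so no constraint on Bblue *)
    (exists T : {set 'I_(size g)}, T \subset Bblack /\ spanning_tree T) /\
    (exists T : {set 'I_(size g)}, T \subset Bblue /\ spanning_tree T).

(* kind of the i-th edge (defaults chosen so that being blue implies i < size g) *)
Definition is_blue_at (V : Type) (g : mgraph V) (i : nat) : Prop :=
  nth Diffusive (map (@ek V) g) i = BlueSolid.
Definition is_diff_at (V : Type) (g : mgraph V) (i : nat) : Prop :=
  nth BlueSolid (map (@ek V) g) i = Diffusive.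

Definition delete_edge (V : Type) (g : mgraph V) (i : nat) : mgraph V :=
  take i g ++ drop i.+1 g.

Definition to_diffusive (V : Type) (g : mgraph V) (i : nat) : mgraph V :=
  take i g ++ [seq Edge (e1 e) (e2 e) Diffusive | e <- take 1 (drop i g)]
    ++ drop i.+1 g.

Definition redundant (V : finType) (g : mgraph V) (i : nat) : Prop :=
  is_blue_at g i /\ doubly_connected (delete_edge g i).

Definition lift_edge (V : Type) (e : edge V) : edge (option V) :=
  Edge (Some (e1 e)) (Some (e2 e)) (ek e).

(* G_new: molecules option V, with M_new = None.  Edge i0 = b0 = (M1,M2) is
   replaced (at position i0) by b1 = (M1,M_new), and b2 = (M2,M_new) is appended
   at position size g; edge ib = b = (M3,M4) is replaced (at position ib) by
   b3 = (M3,M_new), and b4 = (M4,M_new) is appended at position (size g).+1.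
   All other edges keep their positions. *)
Definition gnew (V : Type) (g : mgraph V) (i0 ib : nat) : mgraph (option V) :=
  [seq (let: (k, e) := p in
        if k == i0 then Edge (Some (e1 e)) None Diffusive
        else if k == ib then Edge (Some (e1 e)) None BlueSolid
        else lift_edge e) | p <- zip (iota 0 (size g)) g]
  ++ [seq Edge (Some (e2 e)) None Diffusive | e <- take 1 (drop i0 g)]
  ++ [seq Edge (Some (e2 e)) None BlueSolid | e <- take 1 (drop ib g)].

From HB Require Import structures.
From mathcomp Require Import all_boot zify.
Set Implicit Arguments. Unset Strict Implicit. Unset Printing Implicit Defensive.

(* Double connectivity only depends on the multiset of edges: it asks for a diffusive
   sub-multiset and a disjoint arbitrary one, each connecting all molecules.  Take such a
   black and blue pair and subdivide the diffusive edge b0 = (M1, M2) through M_new.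
   If b0 is black, b1 and b2 replace it.  If b0 is blue and removing it splits the blue
   part into the sides of M1 and M2, a black edge f crossing between the two sides moves
   to the blue part; in the black part minus f every molecule still reaches M1 or M2, so
   b1 and b2 reconnect it through M_new.  The blue part still spans the old molecules and
   reaches M_new through one blue spoke b3 or b4, or through both, in place of b, when b
   was used.  Applied to G minus a redundant edge, this shows that redundancy passes from
   G to G_new; applied to G minus b, where a single spoke suffices, it shows that b3 and
   b4 are each redundant whatever the kind of the other one. *)

Definition ekind_eqb (k k' : ekind) : bool :=
  match k, k' with Diffusive, Diffusive | BlueSolid, BlueSolid => true | _, _ => false end.

Lemma ekind_eqP : Equality.axiom ekind_eqb.
Proof. by case; case; constructor. Qed.

HB.instance Definition _ := hasDecEq.Build ekind ekind_eqP.

Definition edge_tuple (V : Type) (e : edge V) := (e1 e, e2 e, ek e).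
Definition tuple_edge (V : Type) (t : V * V * ekind) := Edge t.1.1 t.1.2 t.2.

Lemma edge_tupleK (V : Type) : cancel (@edge_tuple V) (@tuple_edge V).
Proof. by case. Qed.

HB.instance Definition _ (V : eqType) :=
  Equality.copy (edge V) (can_type (@edge_tupleK V)).

Section SubMultisets.
Variable T : eqType.
Implicit Types (x : T) (s t : seq T).

Definition msub s t := forall x, count_mem x s <= count_mem x t.

Lemma perm_msub s t : perm_eq s t -> msub s t.
Proof. by move/permP=> st x; rewrite st. Qed.

Lemma msub_trans s1 s2 s3 : msub s1 s2 -> msub s2 s3 -> msub s1 s3.
Proof. by move=> h12 h23 x; apply: leq_trans (h12 x) (h23 x). Qed.

Lemma msub_cons2 x s t : msub s t -> msub (x :: s) (x :: t).
Proof. by move=> st y; rewrite /= leq_add2l. Qed.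

Lemma msub_insert x s1 s2 t : msub (s1 ++ s2) t -> msub (s1 ++ x :: s2) (x :: t).
Proof. by move=> st y; rewrite count_cat /= addnCA -count_cat leq_add2l. Qed.

Lemma msub_rem_cons x s t : msub s (x :: t) -> msub (rem x s) t.
Proof. by move=> st y; rewrite count_mem_rem leq_subLR; apply: st. Qed.

Lemma rem_cat x s1 s2 :
  rem x (s1 ++ s2) = if x \in s1 then rem x s1 ++ s2 else s1 ++ rem x s2.
Proof.
elim: s1 => //= y s1 IHs; rewrite in_cons eq_sym; case: eqVneq => //= _.
by rewrite IHs; case: ifP.
Qed.

Lemma perm_rem2 x y s :
  x \in s -> y \in s -> x != y -> perm_eq s (x :: y :: rem y (rem x s)).
Proof.
move=> xs ys xy; apply: perm_trans (perm_to_rem xs) _.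
by rewrite perm_cons perm_to_rem // rem_mem // eq_sym.
Qed.

End SubMultisets.

Lemma msub_map (T U : eqType) (f : T -> U) (s t : seq T) :
  msub s t -> msub (map f s) (map f t).
Proof.
move/count_subseqP=> [s' s't ss']; apply/count_subseqP.
by exists (map f s'); rewrite ?map_subseq ?perm_map.
Qed.

Lemma map_rem (T U : eqType) (f : T -> U) (x : T) (s : seq T) :
  injective f -> map f (rem x s) = rem (f x) (map f s).
Proof.
by move=> f_inj; elim: s => //= y s IHs; rewrite inj_eq //; case: eqP => //= _; rewrite IHs.
Qed.

Lemma perm_map_preim (T U : eqType) (f : T -> U) (s : seq T) (u : seq U) :
  perm_eq u (map f s) -> exists2 s', perm_eq s' s & u = map f s'.
Proof.
elim: u s => [|y u IHu] s; first by case: s => [|x s] /perm_size //; exists [::].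
move=> yus; have /mapP[x xs yE] : y \in map f s by rewrite -(perm_mem yus) mem_head.
have /IHu[s' s's ->] : perm_eq u (map f (rem x s)).
  by rewrite -(perm_cons y) (permPl yus) yE -map_cons perm_map // perm_to_rem.
by exists (x :: s'); rewrite ?yE // (permPr (perm_to_rem xs)) perm_cons.
Qed.

Definition diffusive {V : Type} (e : edge V) : bool := ek e == Diffusive.

Section Edges.
Variable V : eqType.
Implicit Types (e f : edge V) (x y w : V).

Definition joins e x y := ((e1 e == x) && (e2 e == y)) || ((e1 e == y) && (e2 e == x)).

Lemma joinsP e x y :
  reflect (x = e1 e /\ y = e2 e \/ x = e2 e /\ y = e1 e) (joins e x y).
Proof.
apply: (iffP orP) => [[]/andP[/eqP<- /eqP<-] | [][-> ->]]; rewrite ?eqxx; by [left | right].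
Qed.

Lemma joins_sym e x y : joins e x y = joins e y x.
Proof. by rewrite /joins orbC. Qed.

Lemma joins_edge e : joins e (e1 e) (e2 e).
Proof. by rewrite /joins !eqxx. Qed.

Definition spoke (k : ekind) w : edge (option V) := Edge (Some w) None k.

Lemma lift_edge_inj : injective (@lift_edge V).
Proof. by case=> x y k [x' y' k'] [-> -> ->]. Qed.

End Edges.

Section Connectivity.
Variable T : finType.
Implicit Types (L K : seq (edge T)) (e f : edge T).

Definition adj_of L : rel T := fun x y => has (fun e => joins e x y) L.

Definition spans L := forall x y, connect (adj_of L) x y.

Lemma adj_of_sym L : symmetric (adj_of L).
Proof. by move=> x y; apply: eq_has => e; rewrite joins_sym. Qed.

Lemma connect_adj_of_sym L : connect_sym (adj_of L).
Proof. exact/sym_connect_sym/adj_of_sym. Qed.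

Lemma joins_adj_of L e x y : e \in L -> joins e x y -> adj_of L x y.
Proof. by move=> eL exy; apply/hasP; exists e. Qed.

Lemma sub_connect_adj_of L L' x y :
  {subset L <= L'} -> connect (adj_of L) x y -> connect (adj_of L') x y.
Proof.
move=> LL'; apply: connect_sub => {}x {}y /hasP[e eL exy].
exact/connect1/(joins_adj_of (LL' e eL)).
Qed.

Lemma spans_hub L h : (forall x, connect (adj_of L) x h) -> spans L.
Proof. by move=> Lh x y; rewrite (connect_trans (Lh x)) // connect_adj_of_sym. Qed.

Lemma adj_of_rem L f w z x y :
  joins f w z -> x != w -> y != w -> adj_of L x y -> adj_of (rem f L) x y.
Proof.
move=> fwz xw yw /hasP[e eL exy]; apply/hasP; exists e => //; apply: rem_mem eL.
apply/eqP=> ef; move: exy fwz xw yw; rewrite ef.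
by case/joinsP=> -[-> ->] /joinsP[][-> _]; rewrite eqxx.
Qed.

Lemma path_rem_edge L f w z x p :
  joins f w z -> w \notin x :: p -> path (adj_of L) x p -> path (adj_of (rem f L)) x p.
Proof.
move=> fwz wp; apply: (sub_in_path (P := predC1 w)); last first.
  by apply/allP => a ap /=; apply: contraNneq wp => <-.
by move=> a b aw bw; apply: adj_of_rem fwz aw bw.
Qed.

Lemma spans_rem_edge L f u v : spans L -> joins f u v ->
  forall x, connect (adj_of (rem f L)) x u || connect (adj_of (rem f L)) x v.
Proof.
move=> sL fuv x; have /connectP[p] := sL x u.
elim: p x => [|z p IHp] x /=; first by move=> _ ->; rewrite connect0.
case/andP=> /hasP[e eL exz] zp /(IHp z zp) {IHp zp} zuv.
have [ef | nef] := eqVneq e f.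
  by move: exz; rewrite ef; case/joinsP: fuv => -[-> ->] /joinsP[][-> _];
    rewrite connect0 ?orbT.
have xz : adj_of (rem f L) x z by apply/hasP; exists e; rewrite ?rem_mem.
by case/orP: zuv => zw; apply/orP; [left | right]; apply: connect_trans (connect1 xz) zw.
Qed.

Lemma split_first_exit (A : Type) (C : pred A) x p : C x -> ~~ C (last x p) ->
  exists p1 y p2, [/\ p = p1 ++ y :: p2, C (last x p1) & ~~ C y].
Proof.
elim: p x => [|z p IHp] x /= Cx; first by rewrite Cx.
case Cz: (C z); last by exists [::], z, p; rewrite Cz.
by case/(IHp z Cz)=> p1 [y [p2 [-> ? ?]]]; exists (z :: p1), y, p2.
Qed.

(* [f] is the first edge leaving [C] on a shortest path from [M1] to [M2]: the two
   halves of that path avoid [f]. *)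
Lemma exists_crossing_edge L (C : pred T) M1 M2 : spans L -> C M1 -> ~~ C M2 ->
  exists f u v, [/\ f \in L, joins f u v, C u, ~~ C v &
    forall x, connect (adj_of (rem f L)) x M1 || connect (adj_of (rem f L)) x M2].
Proof.
move=> sL CM1; have /connectP[p0 p0_path ->] := sL M1 M2.
case: (shortenP p0_path) => p p_path p_uniq _ {p0 p0_path} CM2.
have [p1 [v [p2 [pE Cu Cv]]]] := split_first_exit CM1 CM2.
move: p_path p_uniq CM2; rewrite pE cat_path -cat_cons cat_uniq last_cat.
case/andP=> p1_path /andP[/hasP[f fL fuv] p2_path] /and3P[_ /hasPn p1p2 _] CM2.
set u := last M1 p1 in Cu fuv p1p2 *.
have vp1 : v \notin M1 :: p1 by apply: p1p2; rewrite mem_head.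
have up2 : u \notin v :: p2 by apply: contraL (mem_last M1 p1) => /p1p2.
have uM1 : connect (adj_of (rem f L)) u M1.
  rewrite connect_adj_of_sym; apply/connectP; exists p1 => //.
  by apply: (path_rem_edge (z := u)) vp1 p1_path; rewrite joins_sym.
have vM2 : connect (adj_of (rem f L)) v (last v p2).
  by apply/connectP; exists p2 => //; apply: path_rem_edge fuv up2 p2_path.
exists f, u, v; split=> // x.
case/orP: (spans_rem_edge sL fuv x) => [xu | xv]; first by rewrite (connect_trans xu uM1).
by rewrite (connect_trans xv vM2) orbT.
Qed.

Lemma spans_cons_crossing K w1 w2 f u v :
    (forall x, connect (adj_of K) x w1 || connect (adj_of K) x w2) ->
    joins f u v -> connect (adj_of K) u w1 -> ~~ connect (adj_of K) v w1 ->
  spans (f :: K).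
Proof.
move=> reach fuv uw1 vw1.
have sub : {subset K <= f :: K} by move=> e eK; rewrite in_cons eK orbT.
have vw2 : connect (adj_of K) w2 v.
  by case/orP: (reach v) vw1 => [-> // | ]; rewrite connect_adj_of_sym.
have w2w1 : connect (adj_of (f :: K)) w2 w1.
  apply: connect_trans (sub_connect_adj_of sub vw2) _.
  apply: connect_trans (sub_connect_adj_of sub uw1).
  by apply/connect1/(joins_adj_of (mem_head _ _)); rewrite joins_sym.
apply: (spans_hub (h := w1)) => x.
by case/orP: (reach x) => /(sub_connect_adj_of sub) // /connect_trans; apply.
Qed.

End Connectivity.

(* [doubly_connected] with the edges taken as a multiset instead of by position: [L1]
   is the black part and [L2] the blue one. *)
Definition dconn (T : finType) (G : seq (edge T)) : Prop :=
  exists L1 L2, [/\ msub (L1 ++ L2) G, all diffusive L1, spans L1 & spans L2].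

Lemma dconn_msub (T : finType) (G G' : seq (edge T)) : msub G G' -> dconn G -> dconn G'.
Proof.
by move=> GG' [L1 [L2 [sub dL1 sL1 sL2]]]; exists L1, L2; split=> //; apply: msub_trans GG'.
Qed.

Section IndexedEdges.
Variables (T : finType) (G : mgraph T).
Implicit Types (S : {set 'I_(size G)}) (s : seq 'I_(size G)).

Lemma adj_eat S s : S =i s -> adj S =2 adj_of [seq eat i | i <- s].
Proof.
move=> Ss x y; rewrite /adj_of has_map.
apply/existsP/hasP => [[i /andP[iS exy]] | [i i_s exy]]; exists i => //.
  by rewrite -Ss.
by rewrite Ss i_s.
Qed.

Lemma connects_spans S s : S =i s -> connects S <-> spans [seq eat i | i <- s].
Proof.
move=> /adj_eat/eq_connect eqS.
by split=> h x y; [rewrite -eqS | rewrite eqS]; apply: h.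
Qed.

Lemma msub_eatP L :
  msub L G <-> exists2 s : seq 'I_(size G), uniq s & [seq eat i | i <- s] = L.
Proof.
have GE : [seq eat i | i <- enum 'I_(size G)] = G := map_tnth_enum (in_tuple G).
split=> [/count_maskP[m _] | [s s_uniq <-] e].
  rewrite -[X in mask _ X]GE -map_mask => /perm_map_preim[s sm ->].
  by exists s; rewrite // (perm_uniq sm) mask_uniq ?enum_uniq.
rewrite -[in X in _ <= X]GE !count_map -!size_filter.
apply: uniq_leq_size => [|i]; first exact: filter_uniq.
by rewrite !mem_filter -enumT mem_enum andbT => /andP[-> _].
Qed.

Lemma connects_spanning_tree S :
  connects S -> exists2 S' : {set 'I_(size G)}, S' \subset S & spanning_tree S'.
Proof.
pose P S := [forall x, forall y, connect (adj S) x y].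
have connectsP S' : reflect (connects S') (P S').
  by apply: (iffP forallP) => h x; [move=> y; apply/(forallP (h x)) | apply/forallP].
move/connectsP/minset_exists=> [S' /minsetP[/connectsP cS' minS'] sS'S].
exists S' => //; split=> // i iS' /connectsP/minS'/(_ (subD1set S' i))/setP/(_ i).
by rewrite !inE eqxx iS'.
Qed.

Lemma doubly_connectedP : doubly_connected G <-> dconn G.
Proof.
have eE S : S =i enum S by move=> i; rewrite mem_enum.
split=> [[Bk [Bu [dis [diffk [[T1 [sT1 [cT1 _]]] [T2 [sT2 [cT2 _]]]]]]]] | ].
  exists [seq eat i | i <- enum T1], [seq eat i | i <- enum T2]; split.
  - rewrite -map_cat; apply/msub_eatP; exists (enum T1 ++ enum T2) => //.
    rewrite cat_uniq !enum_uniq andbT /=; apply/hasPn => i; rewrite !mem_enum => iT2.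
    by apply: contraFN (disjointFl dis (subsetP sT2 i iT2)); apply: (subsetP sT1).
  - apply/allP => _ /mapP[i iT1 ->]; apply/eqP/diffk/(subsetP sT1).
    by rewrite -mem_enum.
  - exact/(connects_spans (eE T1)).
  - exact/(connects_spans (eE T2)).
case=> L1 [L2 [/msub_eatP[s s_uniq sE] dL1 sL1 sL2]]; pose k := size L1.
have sE1 : [seq eat i | i <- take k s] = L1 by rewrite map_take sE take_size_cat.
have sE2 : [seq eat i | i <- drop k s] = L2 by rewrite map_drop sE drop_size_cat.
have tree s' : spans [seq eat i | i <- s'] ->
    exists T0 : {set 'I_(size G)}, T0 \subset [set i in s'] /\ spanning_tree T0.
  have eS : [set i in s'] =i s' by move=> i; rewrite inE.
  by move/(connects_spans eS)/connects_spanning_tree=> [T0]; exists T0.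
exists [set i in take k s], [set i in drop k s]; split; last split; last split.
- rewrite disjoint_subset; apply/subsetP => i; rewrite !inE => i1.
  move: s_uniq; rewrite -{1}(cat_take_drop k s) cat_uniq => /and3P[_ /hasPn i12 _].
  by apply: contraL i1; apply: i12.
- move=> i; rewrite inE => ik; apply/eqP/(allP dL1).
  by rewrite -sE1 map_f.
- by apply: tree; rewrite sE1.
- by apply: tree; rewrite sE2.
Qed.

End IndexedEdges.

Section NewMolecule.
Variable V : finType.
Implicit Types (K R : seq (edge V)) (L G : seq (edge (option V))).
Local Notation lift := (@lift_edge V).

Lemma connect_lift K x y :
  connect (adj_of K) x y -> connect (adj_of (map lift K)) (Some x) (Some y).
Proof.
move/connectP=> [p xp ->]; elim: p x xp => [|z p IHp] x /=; first by rewrite connect0.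
case/andP=> xz /IHp; apply/connect_trans/connect1.
by rewrite /adj_of has_map; apply: sub_has xz => e.
Qed.

Lemma adj_of_spoke L k w : spoke k w \in L -> adj_of L (Some w) None.
Proof. by move/joins_adj_of; apply; apply: joins_edge. Qed.

Lemma spans_lift K L w1 w2 : {subset map lift K <= L} ->
    adj_of L (Some w1) None -> adj_of L (Some w2) None ->
    (forall x, connect (adj_of K) x w1 || connect (adj_of K) x w2) ->
  spans L.
Proof.
move=> sub w1N w2N reach; apply: (spans_hub (h := None)) => -[x|]; last exact: connect0.
by case/orP: (reach x) => /connect_lift/(sub_connect_adj_of sub)/connect_trans->;
  rewrite ?connect1.
Qed.

(* The blue part only spans the old molecules: the new molecule [None] remains to be
   attached to it. *)
Definition almost_dconn G : Prop :=
  exists L K, [/\ msub (L ++ map lift K) G, all diffusive L, spans L & spans K].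

Lemma almost_dconn_msub G G' : msub G G' -> almost_dconn G -> almost_dconn G'.
Proof.
by move=> GG' [L [K [sub dL sL sK]]]; exists L, K; split=> //; apply: msub_trans GG'.
Qed.

Lemma almost_dconn_spokes b0 R (L K : seq (edge V)) :
    msub (L ++ K) R -> all diffusive L ->
    (forall x, connect (adj_of L) x (e1 b0) || connect (adj_of L) x (e2 b0)) -> spans K ->
  almost_dconn [:: spoke Diffusive (e1 b0), spoke Diffusive (e2 b0) & map lift R].
Proof.
move=> sub dL reach sK.
exists [:: spoke Diffusive (e1 b0), spoke Diffusive (e2 b0) & map lift L], K; split=> //.
- by rewrite /= -map_cat; do 2 apply: msub_cons2; apply: msub_map.
- by rewrite /= all_map.
apply: spans_lift reach => [e eL | |]; first by rewrite !in_cons eL !orbT.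
  exact/(adj_of_spoke (k := Diffusive))/mem_head.
by apply: (adj_of_spoke (k := Diffusive)); rewrite !in_cons eqxx orbT.
Qed.

Lemma almost_dconn_subdivide b0 R : dconn (b0 :: R) ->
  almost_dconn [:: spoke Diffusive (e1 b0), spoke Diffusive (e2 b0) & map lift R].
Proof.
case=> L1 [L2 [/msub_rem_cons sub dL1 sL1 sL2]]; rewrite rem_cat in sub.
have reach1 := spans_rem_edge sL1 (joins_edge b0).
have reach2 := spans_rem_edge sL2 (joins_edge b0).
have dL1_rem f : all diffusive (rem f L1) by apply/allP=> e /mem_rem/(allP dL1).
case: ifP sub => [_ sub | _ sub]; first exact: almost_dconn_spokes sub _ reach1 sL2.
have [linked | cut] := boolP (connect (adj_of (rem b0 L2)) (e2 b0) (e1 b0)).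
  apply: almost_dconn_spokes sub dL1 _ _ => [x | ]; first by rewrite sL1.
  apply: (spans_hub (h := e1 b0)) => x.
  by case/orP: (reach2 x) => // /connect_trans; apply.
have [f [u [v [fL1 fuv Cu Cv reach]]]] :=
  exists_crossing_edge (C := connect (adj_of (rem b0 L2))^~ (e1 b0)) sL1 (connect0 _ _) cut.
apply: (almost_dconn_spokes (L := rem f L1) (K := f :: rem b0 L2)) reach _.
- apply: msub_trans sub; apply: perm_msub.
  by rewrite -cat1s perm_catCA /= -cat_cons perm_cat2r perm_sym perm_to_rem.
- exact: dL1_rem.
exact: spans_cons_crossing reach2 fuv Cu Cv.
Qed.

Lemma dconn_attach G k w : almost_dconn G -> dconn (spoke k w :: G).
Proof.
case=> L [K [sub dL sL sK]]; exists L, (spoke k w :: map lift K); split=> //.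
  exact: msub_insert.
have wN : adj_of (spoke k w :: map lift K) (Some w) None by apply/adj_of_spoke/mem_head.
by apply: (spans_lift (K := K) _ wN wN) => [e eK | x]; rewrite ?in_cons ?eK ?orbT ?sK.
Qed.

Lemma dconn_subdivide_blue G b k3 k4 : ~~ diffusive b -> almost_dconn (lift b :: G) ->
  dconn [:: spoke k3 (e1 b), spoke k4 (e2 b) & G].
Proof.
move=> nb [L [K [/msub_rem_cons sub dL sL sK]]].
have bL : lift b \notin L by apply: contra nb => /(allP dL).
rewrite rem_cat (negbTE bL) -map_rem in sub; last exact: lift_edge_inj.
exists L, [:: spoke k3 (e1 b), spoke k4 (e2 b) & map lift (rem b K)]; split=> //.
  by do 2 apply: msub_insert.
apply: (spans_lift (K := rem b K)) (spans_rem_edge sK (joins_edge b)).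
- by move=> e eK; rewrite !in_cons eK !orbT.
- exact/(adj_of_spoke (k := k3))/mem_head.
by apply: (adj_of_spoke (k := k4)); rewrite !in_cons eqxx orbT.
Qed.

End NewMolecule.

Lemma perm_set_nth (T : eqType) (x0 y : T) s k : k < size s ->
  perm_eq (nth x0 s k :: set_nth x0 s k y) (y :: s).
Proof.
move=> ks; rewrite set_nthE ks -[in y :: s](cat_take_drop k s) (drop_nth x0 ks).
by apply/permP=> e; rewrite /= !count_cat /=; lia.
Qed.

Lemma perm_delete_edge (T : eqType) (x0 : edge T) s k : k < size s ->
  perm_eq s (nth x0 s k :: delete_edge s k).
Proof. by move=> ks; rewrite -{1}(cat_take_drop k s) (drop_nth x0 ks) -cat1s perm_catCA. Qed.

Lemma mem_nth_delete_edge (T : eqType) (x0 : edge T) s k i : i < size s -> i != k ->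
  nth x0 s i \in delete_edge s k.
Proof.
move=> i_lt ik; rewrite /delete_edge mem_cat; case: ltngtP ik => // [ik | ki] _.
  by rewrite -(nth_take x0 ik) mem_nth // size_take_min leq_min ik.
rewrite -(subnKC ki) -nth_drop mem_nth ?orbT //.
by rewrite size_drop ltn_sub2r // (leq_ltn_trans ki).
Qed.

Lemma to_diffusiveE (T : Type) (x0 : edge T) s k : k < size s ->
  to_diffusive s k = set_nth x0 s k (Edge (e1 (nth x0 s k)) (e2 (nth x0 s k)) Diffusive).
Proof. by move=> ks; rewrite /to_diffusive set_nthE ks (drop_nth x0 ks) /= take0. Qed.

Lemma is_blue_atE (T : Type) (x0 : edge T) s k :
  is_blue_at s k <-> k < size s /\ ek (nth x0 s k) = BlueSolid.
Proof.
rewrite /is_blue_at; case: (ltnP k (size s)) => ks.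
  by rewrite (nth_map x0) //; split=> [-> | []].
by rewrite nth_default ?size_map //; split=> [|[]].
Qed.

Lemma redundantE (T : finType) (x0 : edge T) G k : redundant G k <->
  [/\ k < size G, ek (nth x0 G k) = BlueSolid & dconn (delete_edge G k)].
Proof.
rewrite /redundant (is_blue_atE x0) doubly_connectedP.
by split=> [[[]] | []]; do ?split.
Qed.

Lemma redundant_perm (T : finType) (x0 : edge T) G k R :
    k < size G -> ek (nth x0 G k) = BlueSolid -> perm_eq G (nth x0 G k :: R) ->
    dconn R ->
  redundant G k.
Proof.
move=> kG blue GR /dconn_msub dR; apply/(redundantE x0); split=> //; apply/dR/perm_msub.
by rewrite -(perm_cons (nth x0 G k)) -(permPr (perm_delete_edge x0 kG)) perm_sym.
Qed.
Arguments redundant_perm {T} x0 {G k R}.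

Section Subdivision.
Variables (V : finType) (g : mgraph V) (i0 ib : nat) (x0 : edge V).
Hypotheses (i0_lt : i0 < size g) (ib_lt : ib < size g).
Hypotheses (b0_diff : ek (nth x0 g i0) = Diffusive) (b_blue : ek (nth x0 g ib) = BlueSolid).

Local Notation n := (size g).
Local Notation lift := (@lift_edge V).
Local Notation b0 := (nth x0 g i0).
Local Notation b := (nth x0 g ib).
Local Notation b1 := (spoke Diffusive (e1 b0)).
Local Notation b2 := (spoke Diffusive (e2 b0)).
Local Notation b3 := (spoke BlueSolid (e1 b)).
Local Notation b4 := (spoke BlueSolid (e2 b)).
Local Notation G := (gnew g i0 ib).
Let y0 := lift x0.
Let R := rem b (rem b0 g).

Lemma b0_neq_b : b0 != b.
Proof. by apply/eqP=> eb0b; move: b_blue; rewrite -eb0b b0_diff. Qed.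

Lemma i0_neq_ib : i0 != ib.
Proof. by apply: contra_neq b0_neq_b => ->. Qed.

Lemma perm_g : perm_eq g [:: b0, b & R].
Proof. by apply: perm_rem2; rewrite ?mem_nth ?b0_neq_b. Qed.

Lemma gnewE : G = set_nth y0 (set_nth y0 (map lift g) i0 b1) ib b3 ++ [:: b2; b4].
Proof.
rewrite /gnew (drop_nth x0 i0_lt) (drop_nth x0 ib_lt) /= !take0; congr (_ ++ _).
apply: (@eq_from_nth _ y0) => [|k]; rewrite size_map size_zip size_iota minnn.
  by rewrite !size_set_nth size_map !(maxn_idPr _).
move=> kn; rewrite (nth_map (0, x0)) ?size_zip ?size_iota ?minnn // nth_zip ?size_iota //.
rewrite nth_iota // add0n nth_set_nth /=.
have [-> | k_ib] := eqVneq k ib; first by rewrite eq_sym (negbTE i0_neq_ib).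
have [-> | k_i0] := eqVneq k i0; rewrite nth_set_nth /= ?eqxx //.
by rewrite (negbTE k_i0) (nth_map x0).
Qed.

Lemma size_gnew : size G = n.+2.
Proof. by rewrite gnewE size_cat !size_set_nth size_map !(maxn_idPr _) ?addn2. Qed.

Lemma nth_gnew_old j : j < n -> j != i0 -> j != ib -> nth y0 G j = lift (nth x0 g j).
Proof.
move=> j_lt j_i0 j_ib; rewrite gnewE nth_cat !size_set_nth size_map !(maxn_idPr _) // j_lt.
by rewrite nth_set_nth /= (negbTE j_ib) nth_set_nth /= (negbTE j_i0) (nth_map x0).
Qed.

Lemma nth_gnew_ib : nth y0 G ib = b3.
Proof.
by rewrite gnewE nth_cat !size_set_nth size_map !(maxn_idPr _) // ib_lt nth_set_nth /= eqxx.
Qed.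

Lemma nth_gnew_last : nth y0 G n.+1 = b4.
Proof.
by rewrite gnewE nth_cat !size_set_nth size_map !(maxn_idPr _) // ltnNge leqnSn subSnn.
Qed.

Lemma perm_gnew : perm_eq G [:: b1, b2, b3, b4 & map lift R].
Proof.
rewrite gnewE; set S1 := set_nth y0 (map lift g) i0 b1.
have h0 := perm_map lift perm_g.
have h1 : perm_eq (lift b0 :: S1) (b1 :: map lift g).
  by rewrite -(nth_map x0 y0 lift i0_lt); apply: perm_set_nth; rewrite size_map.
have h2 : perm_eq (lift b :: set_nth y0 S1 ib b3) (b3 :: S1).
  have -> : lift b = nth y0 S1 ib.
    by rewrite nth_set_nth /= eq_sym (negbTE i0_neq_ib) (nth_map x0).
  by apply: perm_set_nth; rewrite size_set_nth size_map (maxn_idPr i0_lt).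
apply/permP => e; move: (permP h0 e) (permP h1 e) (permP h2 e).
by rewrite /= count_cat /=; lia.
Qed.

Lemma redundant_gnew_old j : j != ib -> redundant g j -> redundant G j.
Proof.
move=> j_ib /(redundantE x0)[j_lt j_blue dH].
have j_i0 : j != i0 by apply/eqP=> j_i0; move: j_blue; rewrite j_i0 b0_diff.
have b0H : b0 \in delete_edge g j by rewrite mem_nth_delete_edge // eq_sym.
have bH : b \in delete_edge g j by rewrite mem_nth_delete_edge // eq_sym.
have pg := perm_delete_edge x0 j_lt; have pH := perm_rem2 b0H bH b0_neq_b.
set R' := rem b (rem b0 _) in pH.
apply: (redundant_perm y0 (R := [:: b3, b4, b1, b2 & map lift R'])).
- by rewrite size_gnew; lia.
- by rewrite nth_gnew_old.
- rewrite nth_gnew_old //; apply/permP => e.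
  move: (permP perm_gnew e) (permP (perm_map lift perm_g) e) (permP (perm_map lift pg) e).
  by move: (permP (perm_map lift pH) e); rewrite /= !count_map; lia.
apply: dconn_subdivide_blue; first by rewrite /diffusive b_blue.
apply: almost_dconn_msub (almost_dconn_subdivide (dconn_msub (perm_msub pH) dH)).
by apply/perm_msub/permP => e /=; lia.
Qed.

Lemma redundant_spoke H k w k' w' : redundant g ib -> k < size H ->
    nth y0 H k = spoke BlueSolid w ->
    perm_eq H [:: spoke BlueSolid w, spoke k' w', b1, b2 & map lift R] ->
  redundant H k.
Proof.
move=> /(redundantE x0)[_ _ dH] kH Hk pH.
apply: (redundant_perm y0 kH); rewrite ?Hk; [by [] | exact: pH | ].
apply/dconn_attach/almost_dconn_subdivide/(dconn_msub _ dH)/perm_msub/permP => e.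
by move: (permP (perm_delete_edge x0 ib_lt) e) (permP perm_g e) => /=; lia.
Qed.

Lemma redundant_to_diffusive p q w w' : redundant g ib -> p < n.+2 -> q < n.+2 -> p != q ->
    nth y0 G p = spoke BlueSolid w -> nth y0 G q = spoke BlueSolid w' ->
    perm_eq G [:: spoke BlueSolid w, spoke BlueSolid w', b1, b2 & map lift R] ->
  redundant (to_diffusive G p) q.
Proof.
rewrite -size_gnew => red p_lt q_lt pq Gp Gq pG.
have pH := perm_set_nth y0 (spoke Diffusive w) p_lt; rewrite Gp in pH.
have -> : to_diffusive G p = set_nth y0 G p (spoke Diffusive w).
  by rewrite (to_diffusiveE y0 p_lt) Gp.
apply: (redundant_spoke (k' := Diffusive) (w' := w) red).
- by rewrite size_set_nth (maxn_idPr p_lt).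
- by rewrite nth_set_nth /= eq_sym (negbTE pq) Gq.
by apply/permP => e; move: (permP pH e) (permP pG e) => /=; lia.
Qed.

Lemma redundant_gnew_spokes : redundant g ib ->
  [/\ redundant G ib, redundant (to_diffusive G ib) n.+1 & redundant (to_diffusive G n.+1) ib].
Proof.
move=> red; have ib_lt2 : ib < n.+2 by lia.
have n1_ib : n.+1 != ib by lia.
split.
- apply: (redundant_spoke (k' := BlueSolid) red _ nth_gnew_ib); first by rewrite size_gnew.
  by apply/permP => e; move: (permP perm_gnew e) => /=; lia.
- apply: redundant_to_diffusive nth_gnew_ib nth_gnew_last _ => //; first by rewrite eq_sym.
  by apply/permP => e; move: (permP perm_gnew e) => /=; lia.
apply: redundant_to_diffusive nth_gnew_last nth_gnew_ib _ => //.
by apply/permP => e; move: (permP perm_gnew e) => /=; lia.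
Qed.

End Subdivision.

Theorem claimA4 (V : finType) (g : mgraph V) (i0 ib : nat) :
  molecular g ->
  doubly_connected g ->
  i0 < size g -> is_diff_at g i0 ->
  ib < size g -> is_blue_at g ib ->
  (* (i) *)
  (forall j : nat, j != ib -> redundant g j -> redundant (gnew g i0 ib) j) /\
  (* (ii) b3 is at position ib, b4 at position (size g).+1 *)
  (redundant g ib ->
     (redundant (gnew g i0 ib) ib \/ redundant (gnew g i0 ib) (size g).+1) /\
     (redundant (gnew g i0 ib) ib ->
        redundant (to_diffusive (gnew g i0 ib) ib) (size g).+1) /\
     (redundant (gnew g i0 ib) (size g).+1 ->
        redundant (to_diffusive (gnew g i0 ib) (size g).+1) ib)).
Proof.
move=> _ _ i0_lt + ib_lt; pose x0 := eat (Ordinal i0_lt).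
rewrite /is_diff_at /is_blue_at !(nth_map x0) // => b0_diff b_blue.
split=> [j | /(redundant_gnew_spokes i0_lt ib_lt b0_diff b_blue)[? ? ?]].
  exact: redundant_gnew_old i0_lt ib_lt b0_diff b_blue j.
by split; [left | split].
Qed.
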